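(* Let $(Y,X,A)$ be jointly distributed with $Y\in\{0,1\}$, $A\in\{0,1\}$ and $X$ taking values in an arbitrary space, and let $R=r^*(X,A)$ with $r^*(x,a)=\mathbb{E}[Y\mid X=x,A=a]$ be the Bayes optimal regressor. Let $\ell:\{0,1\}^2\to\mathbb{R}$ be any loss function and let $C$ be any oblivious property of predictors. Then there exists a predictor $Y^*=Y^*(R,A)$ such that: (1) $Y^*$ is an optimal predictor satisfying $C$, that is, $Y^*$ satisfies $C$ and $\mathbb{E}\,\ell(Y^*,Y)\le\mathbb{E}\,\ell(\widehat{Y},Y)$ for every (possibly randomized) predictor $\widehat{Y}=\widehat{Y}(X,A)\in\{0,1\}$ satisfying $C$; (2) $Y^*$ is derived from $(R,A)$.
   Context: A property of a predictor $\widehat{Y}$ is oblivious if whether it holds depends only on the joint distribution of $(Y,A,\widehat{Y})$. A predictor is derived from $(R,A)$ if it is a possibly randomized function of $(R,A)$ alone (with randomness independent of everything else); in particular it is independent of $X$ conditional on $(R,A)$. *)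

From HB Require Import structures.
From mathcomp Require Import all_boot all_order all_algebra.
From mathcomp Require Import all_classical all_reals all_analysis.
Set Implicit Arguments. Unset Strict Implicit. Unset Printing Implicit Defensive.
Import Order.TTheory GRing.Theory Num.Theory.
Local Open Scope classical_set_scope.
Local Open Scope ring_scope.

(* r is (a version of) the Bayes optimal regressor E[Y | X, A]: a measurable
   function of (x,a) such that r(X,A) is integrable and, for every set in
   sigma(X,A) = {(X,A)^-1 G | G measurable in T * bool},
   E[Y 1_{(X,A) in G}] = E[r(X,A) 1_{(X,A) in G}]. *)
Definition is_bayes_regressor (R : realType) (d : measure_display)
  (Omega : measurableType d) (P : probability Omega R)
  (d' : measure_display) (T : measurableType d')
  (Y A : Omega -> bool) (X : Omega -> T) (r : T * bool -> R) : Prop :=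
  measurable_fun setT r /\
  P.-integrable setT (fun w => (r (X w, A w))%:E) /\
  forall G : set (T * bool), measurable G ->
    (\int[P]_(w in (fun w => (X w, A w)) @^-1` G) ((Y w)%:R)%:E
     = \int[P]_(w in (fun w => (X w, A w)) @^-1` G) (r (X w, A w))%:E)%E.

(* A (possibly randomized) predictor Yhat = Yhat(X,A) in {0,1}, with its
   randomness independent of everything else, is described by its Markov
   kernel p(x,a) = P(Yhat = 1 | X = x, A = a): a measurable map into [0,1].
   More generally a randomized predictor that is a function of some variable
   Z taking values in a measurable space S is a kernel S -> [0,1]. *)
Definition kernel01 (R : realType) (d : measure_display) (S : measurableType d)
  (p : S -> R) : Prop :=
  measurable_fun setT p /\ forall z, 0 <= p z <= 1.

(* Joint distribution (probability mass function on {0,1}^3) of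
   (Y, A, Yhat) where Yhat has kernel p given (X, A):
   P(Y = y, A = a, Yhat = yh) = E[1_{Y=y} 1_{A=a} P(Yhat = yh | X, A)]. *)
Definition joint_dist (R : realType) (d : measure_display)
  (Omega : measurableType d) (P : probability Omega R)
  (d' : measure_display) (T : measurableType d')
  (Y A : Omega -> bool) (X : Omega -> T) (p : T * bool -> R)
  : bool -> bool -> bool -> R :=
  fun y a yh => Rintegral P setT (fun w =>
    (Y w == y)%:R * (A w == a)%:R *
    (if yh then p (X w, A w) else 1 - p (X w, A w))).

(* An oblivious property: a property whose truth depends only on the joint
   distribution of (Y, A, Yhat); i.e. a predicate on such distributions. *)
Definition oblivious_property (R : realType) : Type :=
  (bool -> bool -> bool -> R) -> Prop.

Definition expected_loss (R : realType) (loss : bool -> bool -> R)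
  (jd : bool -> bool -> bool -> R) : R :=
  \sum_(y : bool) \sum_(a : bool) \sum_(yh : bool) loss yh y * jd y a yh.

(* The predictor derived from (R, A) = (r(X,A), A) via kernel q : R * bool -> [0,1]
   has, as a predictor of (X, A), the kernel (x,a) |-> q (r(x,a), a). *)
Definition derived_kernel (R : realType) (d' : measure_display)
  (T : measurableType d') (r : T * bool -> R) (q : R * bool -> R)
  : T * bool -> R :=
  fun z => q (r z, z.2).

From HB Require Import structures.
From mathcomp Require Import all_boot all_order all_algebra.
From mathcomp Require Import all_classical all_reals all_analysis.
From mathcomp Require Import measurable_realfun.
Set Implicit Arguments. Unset Strict Implicit. Unset Printing Implicit Defensive.
Import Order.TTheory GRing.Theory Num.Theory.
Local Open Scope classical_set_scope.
Local Open Scope ring_scope.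

(** Let p0 be an optimal predictor with kernel p0(X, A), and let q(R, A) be
    the conditional expectation of p0(X, A) given (R, A) = (r(X, A), A).
    For every (y, a, yh), P(Y = y, A = a, Yhat = yh) is the expectation of
    1{Y = y} 1{A = a} P(Yhat = yh | X, A).  Conditioning on (X, A) replaces
    1{Y = y} by a function of R; the remaining factor 1{A = a} times that
    function is then (R, A)-measurable, so conditioning on (R, A) replaces
    p0(X, A) by q(R, A), and conditioning on (X, A) once more restores
    1{Y = y}.  Hence q induces the same joint law of (Y, A, Yhat) as p0, so it
    satisfies the same oblivious properties and has the same expected loss.
    The conditional expectation is a Radon-Nikodym derivative; clamping it
    (and the regressor r) to [0, 1] only changes it on a null set. *)

Definition clamp01 {R : realDomainType} (x : R) : R := Num.min (Num.max x 0) 1.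

Lemma clamp01_01 (R : realDomainType) (x : R) : 0 <= clamp01 x <= 1.
Proof. by rewrite le_min ler01 le_max lexx orbT ge_min lexx orbT. Qed.

Lemma clamp01_id (R : realDomainType) (x : R) : 0 <= x <= 1 -> clamp01 x = x.
Proof. by case/andP=> x0 x1; rewrite /clamp01 max_l// min_l. Qed.

Section kernel01.
Context (R : realType) d (S : measurableType d).

Lemma kernel01_clamp01 (k : S -> R) :
  measurable_fun setT k -> kernel01 (clamp01 \o k).
Proof.
move=> mk; split => [|s]; last exact: clamp01_01.
exact: measurable_minr (measurable_maxr mk (measurable_cst _)) (measurable_cst _).
Qed.

Lemma kernel01_bernoulli_pmf (g : S -> R) b :
  kernel01 g -> kernel01 (fun s => bernoulli_pmf (g s) b).
Proof.
case=> mg g01; split => [|s]; first by case: b => //; exact: measurable_funB.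
have /andP[g0 g1] := g01 s; case: b => /=; first exact: g01.
by rewrite subr_ge0 g1 lerBlDr lerDl.
Qed.

Lemma kernel01_ge0 (g : S -> R) : kernel01 g -> forall s, 0 <= g s.
Proof. by case=> _ g01 s; case/andP: (g01 s). Qed.

Lemma kernel01M (g h : S -> R) : kernel01 g -> kernel01 h -> kernel01 (g \* h).
Proof.
case=> mg g01 [mh h01]; split => [|s]; first exact: measurable_funM.
have /andP[g0 g1] := g01 s; have /andP[h0 h1] := h01 s.
by rewrite mulr_ge0//= mulr_ile1.
Qed.

Lemma kernel01_comp d' (S' : measurableType d') (g : S -> R) (h : S' -> S) :
  kernel01 g -> measurable_fun setT h -> kernel01 (g \o h).
Proof.
by case=> mg g01 mh; split => [|s]; [exact: measurableT_comp|exact: g01].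
Qed.

End kernel01.

Lemma measurable_fun_from_bool d (U : measurableType d) (g : bool -> U) :
  measurable_fun setT g.
Proof. by []. (* every subset of [bool] is measurable *) Qed.

Lemma kernel01_natr (R : realType) d (S : measurableType d) (f : S -> bool) :
  measurable_fun setT f -> kernel01 (fun s => (f s)%:R : R).
Proof.
move=> mf; split => [|s]; last by rewrite ler0n lern1 leq_b1.
exact: measurableT_comp (measurable_fun_from_bool (fun b : bool => b%:R : R)) mf.
Qed.
Arguments kernel01_natr {R d S f}.

Local Open Scope ereal_scope.
Import HBNNSimple.

(** [cond_exp_eq P pi g1 g2] is E[g1 | pi] = E[g2 | pi], P-almost surely. *)
Definition cond_exp_eq d (Om : measurableType d) (R : realType)
  (P : {measure set Om -> \bar R}) d' (S : measurableType d') (pi : Om -> S)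
  (g1 g2 : Om -> R) : Prop :=
  forall G, measurable G ->
    \int[P]_(w in pi @^-1` G) (g1 w)%:E = \int[P]_(w in pi @^-1` G) (g2 w)%:E.

Section integral_gt0.
Context (R : realType) d (Om : measurableType d).
Variable P : {measure set Om -> \bar R}.

Lemma gt0_integral_eq0 (E : set Om) (f : Om -> R) : measurable E ->
  measurable_fun E f -> (forall w, E w -> (0 < f w)%R) ->
  \int[P]_(w in E) (f w)%:E = 0 -> P E = 0.
Proof.
move=> mE mf f0 intf0.
have absf0 : \int[P]_(w in E) `|(f w)%:E| = 0.
  rewrite -intf0; apply: eq_integral => w /[!inE] Ew.
  by rewrite gee0_abs// lee_fin ltW// f0.
have mEf : measurable_fun E (EFin \o f) by exact/measurable_EFinP.
have [N [mN PN0 EN]] := (ae_eq_integral_abs P mE mEf).1 absf0.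
apply: (@subset_measure0 _ _ _ P _ _ mE mN _ PN0) => w Ew.
by apply: (EN w) => /(_ Ew) [fw0]; move: (f0 w Ew); rewrite fw0 ltxx.
Qed.

End integral_gt0.

Section pull_out.
Context (R : realType) d (Om : measurableType d) d' (S : measurableType d').
Variables (P : {measure set Om -> \bar R}) (pi : Om -> S).
Hypothesis mpi : measurable_fun setT pi.

Let mpre G : measurable G -> measurable (pi @^-1` G).
Proof. by move=> mG; rewrite -[X in measurable X]setTI; exact: mpi. Qed.

Lemma integral_nnsfun_compM (h : {nnsfun S >-> R}) (g : Om -> R) :
  measurable_fun setT g -> (forall w, (0 <= g w)%R) ->
  \int[P]_w ((h (pi w))%:E * (g w)%:E) =
  \sum_(y \in range h) y%:E * \int[P]_(w in pi @^-1` (h @^-1` [set y])) (g w)%:E.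
Proof.
move=> mg g0.
have hE w : (h (pi w))%:E * (g w)%:E =
    \sum_(y \in range h) (y * \1_(h @^-1` [set y]) (pi w))%:E * (g w)%:E.
  rewrite -(@ge0_mule_fsuml _ _ (g w)%:E
              (fun y => (y * \1_(h @^-1` [set y]) (pi w))%:E)).
    by rewrite fsumEFin // -fimfunE.
  by move=> y; rewrite EFinM nnfun_muleindic_ge0.
under eq_integral do rewrite hE.
rewrite ge0_integral_fsum//; last 2 first.
- move=> y; apply: emeasurable_funM; apply/measurable_EFinP => //.
  by apply: measurable_funM => //; exact: measurableT_comp.
- by move=> y w _; rewrite mule_ge0 ?lee_fin// -lee_fin EFinM nnfun_muleindic_ge0.
apply: eq_fsbigr => y /[!inE] -[t _ <-].
under eq_integral do rewrite EFinM -muleA.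
rewrite ge0_integralZl ?lee_fin//.
- congr (_ * _); rewrite -[in RHS](setTI (pi @^-1` _)) integral_mkcondr.
  by apply: eq_integral => w _; rewrite epatch_indic muleC.
- apply: emeasurable_funM; apply/measurable_EFinP => //.
  exact: measurableT_comp.
- by move=> w _; rewrite mule_ge0 ?lee_fin.
Qed.

Lemma cond_exp_eq_integralM (g1 g2 : Om -> R) (f : S -> R) :
  measurable_fun setT g1 -> measurable_fun setT g2 ->
  (forall w, (0 <= g1 w)%R) -> (forall w, (0 <= g2 w)%R) ->
  measurable_fun setT f -> (forall s, (0 <= f s)%R) ->
  cond_exp_eq P pi g1 g2 ->
  \int[P]_w (f (pi w) * g1 w)%:E = \int[P]_w (f (pi w) * g2 w)%:E.
Proof.
move=> mg1 mg2 g10 g20 mf f0 g12.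
have mfE : measurable_fun setT (EFin \o f) by exact/measurable_EFinP.
pose h := nnsfun_approx measurableT mfE.
have approx (g : Om -> R) : measurable_fun setT g -> (forall w, (0 <= g w)%R) ->
    \int[P]_w (f (pi w) * g w)%:E =
    limn (fun n => \int[P]_w ((h n (pi w))%:E * (g w)%:E)).
  move=> mg g0; rewrite -monotone_convergence//; last 3 first.
  - move=> n; apply/measurable_EFinP/measurable_funM => //.
    exact: measurableT_comp.
  - by move=> n w _; rewrite mule_ge0 ?lee_fin.
  - move=> w _ m n mn; rewrite lee_wpmul2r ?lee_fin//.
    exact/lefP/nd_nnsfun_approx.
  apply: eq_integral => w _; apply/esym/cvg_lim => //; rewrite EFinM.
  apply: cvgeZr => //; apply: cvg_nnsfun_approx => // x _.
  by rewrite lee_fin.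
rewrite (approx _ mg1 g10) (approx _ mg2 g20); congr (limn _); apply/funext => n.
rewrite !integral_nnsfun_compM//; apply: eq_fsbigr => y _.
by rewrite g12//; exact: measurable_funPTI.
Qed.

Lemma cond_exp_eq_lt_null (g1 g2 : Om -> R) (G : set S) : measurable G ->
  P.-integrable setT (EFin \o g1) -> P.-integrable setT (EFin \o g2) ->
  cond_exp_eq P pi g1 g2 -> (forall w, G (pi w) -> (g1 w < g2 w)%R) ->
  P (pi @^-1` G) = 0.
Proof.
move=> mG ig1 ig2 g12 lt12.
have mpiG := mpre mG.
have [ig1G ig2G] : P.-integrable (pi @^-1` G) (EFin \o g1) /\
                  P.-integrable (pi @^-1` G) (EFin \o g2).
  by split; apply: integrableS ig1 || apply: integrableS ig2.
apply: (gt0_integral_eq0 (f := fun w => g2 w - g1 w)%R) => //.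
- apply: measurable_funB; apply/measurable_EFinP.
  + exact: (measurable_int P ig2G).
  + exact: (measurable_int P ig1G).
- by move=> w /lt12; rewrite subr_gt0.
under eq_integral do rewrite EFinB.
by rewrite integralB_EFin// g12// subee// integrable_fin_num.
Qed.

End pull_out.

Section cond_exp_probability.
Context (R : realType) d (Om : measurableType d) d' (S : measurableType d').
Variables (P : probability Om R) (pi : Om -> S).
Hypothesis mpi : measurable_fun setT pi.

Let mpre G : measurable G -> measurable (pi @^-1` G).
Proof. by move=> mG; rewrite -[X in measurable X]setTI; exact: mpi. Qed.

Lemma kernel01_integrable (E : set Om) (g : Om -> R) :
  measurable E -> kernel01 g -> P.-integrable E (EFin \o g).
Proof.
move=> mE [mg g01]; apply: measurable_bounded_integrable => //.
- exact: le_lt_trans (probability_le1 P mE) (ltry _).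
- exact: measurable_funTS.
- exists 1%R; split => // M M1 w _; have /andP[g0 g1] := g01 w.
  by rewrite /= ger0_norm// (le_trans g1)// ltW.
Qed.

Lemma cond_exp_eq_clamp01 (g : Om -> R) (k : S -> R) : kernel01 g ->
  measurable_fun setT k -> P.-integrable setT (EFin \o (k \o pi)) ->
  cond_exp_eq P pi g (k \o pi) -> cond_exp_eq P pi g (clamp01 \o k \o pi).
Proof.
move=> kg mk ik gk.
have ig := kernel01_integrable measurableT kg.
pose G1 := k @^-1` `]1%R, +oo[%classic; pose G0 := k @^-1` `]-oo, 0%R[%classic.
have mG1 : measurable G1 by rewrite -[G1]setTI; exact: mk.
have mG0 : measurable G0 by rewrite -[G0]setTI; exact: mk.
have PG1 : P (pi @^-1` G1) = 0.
  apply: (cond_exp_eq_lt_null mpi mG1 ig ik gk) => w.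
  rewrite /G1 /= in_itv /= andbT; apply: le_lt_trans.
  by case/andP: (kg.2 w).
have PG0 : P (pi @^-1` G0) = 0.
  apply: (cond_exp_eq_lt_null mpi mG0 ik ig (fun G mG => esym (gk G mG))) => w.
  rewrite /G0 /= in_itv /= => /lt_le_trans; apply.
  by case/andP: (kg.2 w).
move=> G mG; rewrite gk//; apply: ae_eq_integral => //.
- exact: mpre.
- apply: measurable_funTS; exact: (measurable_int P ik).
- apply: measurable_funTS; apply/measurable_EFinP; apply: measurableT_comp => //.
  exact: (kernel01_clamp01 mk).1.
exists (pi @^-1` G1 `|` pi @^-1` G0); split.
- by apply: measurableU; exact: mpre.
- by rewrite measureU0 ?PG1//; exact: mpre.
move=> w /= /not_implyP[_ neq].
have [k1|k1] := ltP 1%R (k (pi w)); first by left; rewrite /G1 /= in_itv /= andbT.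
have [k0|k0] := ltP (k (pi w)) 0%R; first by right; rewrite /G0 /= in_itv.
by exfalso; apply: neq; rewrite clamp01_id ?k0.
Qed.

Lemma cond_exp_eq_bernoulli_pmf (g1 g2 : Om -> R) b :
  kernel01 g1 -> kernel01 g2 -> cond_exp_eq P pi g1 g2 ->
  cond_exp_eq P pi (fun w => bernoulli_pmf (g1 w) b)
                   (fun w => bernoulli_pmf (g2 w) b).
Proof.
move=> kg1 kg2 g12; case: b => //= G mG.
have k1 : kernel01 (fun _ : Om => 1%R) by split => // w; rewrite ler01 lexx.
under eq_integral do rewrite EFinB.
under [RHS]eq_integral do rewrite EFinB.
have mpiG := mpre mG.
by rewrite !integralB_EFin ?g12//; apply: kernel01_integrable.
Qed.

End cond_exp_probability.

(** The unused [kernel01 f] argument is what lets the measure instances below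
    be found by unification. *)
Definition weighted_distribution d (Om : measurableType d) (R : realType)
    (P : probability Om R) d' (S : measurableType d') (rho : {mfun Om >-> S})
    (f : Om -> R) & kernel01 f : set S -> \bar R :=
  fun G => \int[P]_(w in rho @^-1` G) (f w)%:E.

Section weighted_distribution.
Context (R : realType) d (Om : measurableType d) d' (S : measurableType d').
Variables (P : probability Om R) (rho : {mfun Om >-> S}) (f : Om -> R).
Hypothesis kf : kernel01 f.

Local Notation nu := (weighted_distribution P rho kf).

Let f0 w : 0 <= (f w)%:E.
Proof. by rewrite lee_fin; case/andP: (kf.2 w). Qed.

Let nu0 : nu set0 = 0.
Proof. by rewrite /weighted_distribution preimage_set0 integral_set0. Qed.

Let nu_ge0 G : 0 <= nu G.
Proof. exact: integral_ge0. Qed.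

Let nu_sigma_additive : semi_sigma_additive nu.
Proof.
move=> F mF tF mUF; rewrite /weighted_distribution preimage_bigcup.
apply: (@semi_sigma_additive_nng_induced _ _ _ P (EFin \o f)) => //.
- exact/measurable_EFinP/kf.1.
- by move=> n; exact: measurable_funPTI.
- apply/trivIsetP => /= i j _ _ ij; rewrite -preimage_setI.
  by move/trivIsetP : tF => /(_ _ _ _ _ ij) ->//; rewrite preimage_set0.
- by rewrite -preimage_bigcup; exact: measurable_funPTI.
Qed.

HB.instance Definition _ := isMeasure.Build _ _ _ nu nu0 nu_ge0 nu_sigma_additive.

Lemma weighted_distribution_le G : measurable G -> nu G <= distribution P rho G.
Proof.
move=> mG; rewrite /weighted_distribution /distribution /pushforward.
rewrite -[leRHS]mul1e -integral_cst; last exact: measurable_funPTI.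
apply: ge0_le_integral => //; first exact: measurable_funPTI.
- exact/measurable_EFinP/measurable_funTS/kf.1.
- by move=> w _; rewrite lee_fin; case/andP: (kf.2 w).
Qed.

Let nu_fin : fin_num_fun nu.
Proof.
move=> G mG; rewrite ge0_fin_numE// (le_lt_trans (weighted_distribution_le mG))//.
by rewrite (le_lt_trans (probability_le1 _ mG)) ?ltry.
Qed.

HB.instance Definition _ := @Measure_isFinite.Build _ _ _ nu nu_fin.

Lemma weighted_distribution_dominates : nu `<< distribution P rho.
Proof.
apply/null_content_dominatesP => G mG PG0.
by apply/eqP; rewrite eq_le nu_ge0 andbT -PG0 weighted_distribution_le.
Qed.

End weighted_distribution.

Lemma exists_cond_exp_kernel01 (R : realType) d (Om : measurableType d)
    (P : probability Om R) d' (S : measurableType d') (rho : Om -> S)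
    (f : Om -> R) :
  measurable_fun setT rho -> kernel01 f ->
  exists k : S -> R, kernel01 k /\ cond_exp_eq P rho f (k \o rho).
Proof.
move=> mrho kf.
pose rhoM : {mfun Om >-> S} :=
  HB.pack rho (isMeasurableFun.Build _ _ _ _ rho mrho).
have [h [h0 hfin ih hE]] :=
  radon_nikodym_sigma_finite
    (weighted_distribution_dominates (P := P) (rho := rhoM) kf).
pose k := fine \o h.
have hk s : h s = (k s)%:E by rewrite /k /= fineK.
have mh : measurable_fun setT h := measurable_int _ ih.
have mk : measurable_fun setT k.
  exact: measurableT_comp (fine_measurable measurableT) mh.
have hrho G : measurable G ->
    \int[distribution P rhoM]_(s in G) h s =
    \int[P]_(w in rho @^-1` G) (k (rho w))%:E.
  move=> mG; rewrite ge0_integral_pushforward//; last exact: measurable_funTS.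
  by apply: eq_integral => w _; rewrite /= hk.
have ik : P.-integrable setT (EFin \o (k \o rho)).
  apply/integrableP; split; first exact/measurable_EFinP/measurableT_comp.
  have [_] := integrableP _ _ _ ih.
  rewrite ge0_integral_pushforward//; last exact: measurableT_comp.
  by rewrite preimage_setT; under eq_integral do rewrite /= hk.
exists (clamp01 \o k); split; first exact: kernel01_clamp01.
apply: cond_exp_eq_clamp01 => // G mG.
by rewrite -hrho// -hE.
Qed.

Section joint_distribution.
Context (R : realType) d (Om : measurableType d) (P : probability Om R)
  d' (T : measurableType d').
Variables (Y A : Om -> bool) (X : Om -> T) (r : T * bool -> R).
Hypotheses (mY : measurable_fun setT Y) (mA : measurable_fun setT A)
  (mX : measurable_fun setT X) (mr : measurable_fun setT r).

Local Notation pi := (fun w => (X w, A w)).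
Local Notation rho := (fun w => (r (X w, A w), A w)).

Let mpi : measurable_fun setT pi.
Proof. exact: measurable_fun_pair. Qed.

Let mrho : measurable_fun setT rho.
Proof. by apply: measurable_fun_pair => //; exact: measurableT_comp. Qed.

Hypothesis hY : cond_exp_eq P pi (fun w => (Y w)%:R) (clamp01 \o r \o pi).

Lemma integral_mul_label (f : T * bool -> R) y : kernel01 f ->
  \int[P]_w (f (pi w) * (Y w == y)%:R)%:E =
  \int[P]_w (f (pi w) * bernoulli_pmf (clamp01 (r (pi w))) y)%:E.
Proof.
move=> kf.
transitivity (\int[P]_w (f (pi w) * bernoulli_pmf (Y w)%:R y)%:E).
  by apply: eq_integral => w _; case: (Y w); case: y; rewrite /= ?subrr ?subr0.
have kY : kernel01 (fun w => (Y w)%:R : R) := kernel01_natr mY.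
have kr := kernel01_comp (kernel01_clamp01 mr) mpi.
have kYb := kernel01_bernoulli_pmf y kY; have krb := kernel01_bernoulli_pmf y kr.
apply: (cond_exp_eq_integralM mpi kYb.1 krb.1 (kernel01_ge0 kYb)
  (kernel01_ge0 krb) kf.1 (kernel01_ge0 kf)).
exact: (cond_exp_eq_bernoulli_pmf mpi y kY kr hY).
Qed.

Lemma joint_dist_cond_exp (p : T * bool -> R) (q : R * bool -> R) :
  kernel01 p -> kernel01 q -> cond_exp_eq P rho (p \o pi) (q \o rho) ->
  joint_dist P Y A X (derived_kernel r q) = joint_dist P Y A X p.
Proof.
move=> kp kq hq; apply/funext => y; apply/funext => a; apply/funext => yh.
rewrite /joint_dist /Rintegral; congr fine.
have ka d'' (U : measurableType d'') :
    kernel01 (fun z : U * bool => (z.2 == a)%:R : R).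
  exact: kernel01_natr
    (measurableT_comp (measurable_fun_from_bool (eq_op^~ a)) measurable_snd).
pose fq z := ((z.2 == a)%:R * bernoulli_pmf (q (r z, z.2)) yh)%R.
pose fp z := ((z.2 == a)%:R * bernoulli_pmf (p z) yh)%R.
pose gr (s : R * bool) := (bernoulli_pmf (clamp01 s.1) y * (s.2 == a)%:R)%R.
have kfq : kernel01 fq.
  apply: kernel01M (ka _ _) (kernel01_bernoulli_pmf yh (kernel01_comp kq _)).
  exact: measurable_fun_pair.
have kfp : kernel01 fp := kernel01M (ka _ _) (kernel01_bernoulli_pmf yh kp).
have kgr : kernel01 gr.
  apply: kernel01M (ka _ _).
  exact: kernel01_bernoulli_pmf y (kernel01_clamp01 measurable_fst).
have kppi := kernel01_comp kp mpi; have kqrho := kernel01_comp kq mrho.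
have kpb := kernel01_bernoulli_pmf yh kppi.
have kqb := kernel01_bernoulli_pmf yh kqrho.
transitivity (\int[P]_w (fq (pi w) * (Y w == y)%:R)%:E).
  by apply: eq_integral => w _; rewrite /fq -mulrA mulrC; reflexivity.
rewrite integral_mul_label//.
transitivity (\int[P]_w (gr (rho w) * bernoulli_pmf (q (rho w)) yh)%:E).
  by apply: eq_integral => w _; rewrite /fq /gr mulrC mulrA.
transitivity (\int[P]_w (gr (rho w) * bernoulli_pmf (p (pi w)) yh)%:E).
  symmetry; apply: (cond_exp_eq_integralM mrho kpb.1 kqb.1 (kernel01_ge0 kpb)
    (kernel01_ge0 kqb) kgr.1 (kernel01_ge0 kgr)).
  exact: (cond_exp_eq_bernoulli_pmf mrho yh kppi kqrho hq).
transitivity (\int[P]_w (fp (pi w) * bernoulli_pmf (clamp01 (r (pi w))) y)%:E).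
  by apply: eq_integral => w _; rewrite /fp /gr -mulrA mulrC.
rewrite -integral_mul_label//.
by apply: eq_integral => w _; rewrite /fp mulrC mulrA; reflexivity.
Qed.

End joint_distribution.

Local Close Scope ereal_scope.
Unset Implicit Arguments.

Theorem proposition5p2 (R : realType) (d : measure_display)
  (Omega : measurableType d) (P : probability Omega R)
  (d' : measure_display) (T : measurableType d')
  (Y A : Omega -> bool) (X : Omega -> T)
  (mY : measurable_fun setT Y) (mA : measurable_fun setT A)
  (mX : measurable_fun setT X)
  (r : T * bool -> R) (hr : is_bayes_regressor P Y A X r)
  (loss : bool -> bool -> R) (C : oblivious_property R)
  (hopt : exists p0 : T * bool -> R,
      kernel01 p0 /\ C (joint_dist P Y A X p0) /\
      forall p : T * bool -> R, kernel01 p -> C (joint_dist P Y A X p) ->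
        expected_loss loss (joint_dist P Y A X p0)
        <= expected_loss loss (joint_dist P Y A X p)) :
  exists q : R * bool -> R,
    kernel01 q /\
    C (joint_dist P Y A X (derived_kernel r q)) /\
    forall p : T * bool -> R, kernel01 p -> C (joint_dist P Y A X p) ->
      expected_loss loss (joint_dist P Y A X (derived_kernel r q))
      <= expected_loss loss (joint_dist P Y A X p).
Proof.
case: hopt => p0 [kp0 [Cp0 p0_opt]]; case: hr => mr [ir hbayes].
pose pi w := (X w, A w).
have mpi : measurable_fun setT pi by exact: measurable_fun_pair.
have hY := cond_exp_eq_clamp01 mpi (kernel01_natr mY) mr ir hbayes.
have mrho : measurable_fun setT (fun w => (r (pi w), A w)).
  by apply: measurable_fun_pair => //; exact: measurableT_comp.
have [q [kq hq]] := exists_cond_exp_kernel01 P mrho (kernel01_comp kp0 mpi).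
by exists q; rewrite (joint_dist_cond_exp mY mA mX mr hY kp0 kq hq).
Qed.
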